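(* Let $p=4k+1$ be a prime, let $J(k)=\sum_{i=1}^{4k-2}\big(\frac{i(i+1)(i+2)}{p}\big)$ and $d(k)=\frac{J(k)^2-4}{32}$, and let $S\subset\mathbb{P}^5$ be the surface over $\mathbb{F}_p$ defined by $x_1^2-x_2^2=x_3^2$, $x_0^2-x_1^2=x_4^2$, $x_0^2-x_2^2=x_5^2$. Then $$n_p(K_4)=\frac{k(k-1)(k-4)+2k\,d(k)}{24}\quad\text{if and only if}\quad |S(\mathbb{F}_p)|=(p+1)^2+J(k)^2 .$$
   Context: $\big(\frac{a}{p}\big)$ is the Legendre symbol. $n_p(K_4)$ is the number of $4$-tuples $(r_1,r_2,r_3,r_4)$ of pairwise distinct residues modulo $p$ such that all differences $r_i-r_j$ ($i\neq j$) are nonzero quadratic residues mod $p$, where tuples differing by a permutation of entries or by adding the same residue to all entries are identified. *)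

From HB Require Import structures.
From mathcomp Require Import all_boot all_order all_algebra.
Set Implicit Arguments. Unset Strict Implicit. Unset Printing Implicit Defensive.
Import Order.TTheory GRing.Theory Num.Theory.
Local Open Scope ring_scope.

Definition legendre (p a : nat) : int :=
  if (p %| a)%N then 0
  else if [exists y : 'I_p, ((y * y) %% p == a %% p)%N] then 1 else -1.

Definition Jk (k : nat) : int :=
  \sum_(1 <= i < (4 * k - 2).+1) legendre (4 * k + 1) (i * (i + 1) * (i + 2)).

Definition dk (k : nat) : rat := ((Jk k)%:~R ^+ 2 - 4) / 32.

Definition nzqr (p : nat) (x : 'F_p) : bool := (x != 0) && [exists y : 'F_p, y * y == x].

Definition goodK4 (p : nat) : {set {set 'F_p}} :=
  [set A : {set 'F_p} | (#|A| == 4)%N &&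
     [forall x in A, forall y in A, (x != y) ==> nzqr (x - y)]].

Definition npK4 (p : nat) : nat :=
  #|[set [set [set a + t | a in A] | t : 'F_p] | A : {set 'F_p} in goodK4 p]|.

Definition Seq (p : nat) (x : {ffun 'I_6 -> 'F_p}) : bool :=
  [&& x (inord 1) ^+ 2 - x (inord 2) ^+ 2 == x (inord 3) ^+ 2,
      x (inord 0) ^+ 2 - x (inord 1) ^+ 2 == x (inord 4) ^+ 2 &
      x (inord 0) ^+ 2 - x (inord 2) ^+ 2 == x (inord 5) ^+ 2].

Definition vscale (p : nat) (c : 'F_p) (x : {ffun 'I_6 -> 'F_p}) : {ffun 'I_6 -> 'F_p} :=
  [ffun i => c * x i].

Definition Spoints (p : nat) : {set {set {ffun 'I_6 -> 'F_p}}} :=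
  [set [set vscale c x | c in [set c : 'F_p | c != 0]]
     | x in [set x : {ffun 'I_6 -> 'F_p} | (x != [ffun => 0]) && Seq x]].

From mathcomp Require Import all_boot all_order all_algebra ring zify.
Import Order.TTheory GRing.Theory Num.Theory.
Local Open Scope ring_scope.
Set Implicit Arguments. Unset Strict Implicit. Unset Printing Implicit Defensive.

(* Put u_i = x_i^2 and let r(u) be the number of square roots of u.  The affine cone
   over S has (p - 1)|S(F_p)| + 1 points, and grouping them by (u_0, u_1, u_2) gives
   sum_{u_0,u_1,u_2} prod r(a - b), the product running over the six pairs {a, b} of
   the points 0, u_0, u_1, u_2.  Since p = 1 (mod 4), r(-u) = r(u); moreover r(0) = 1
   and r(u) is 2 or 0 for u <> 0.  Four distinct points thus contribute 64 exactly
   when they form a clique of the Paley graph, and the triples (u_0, u_1, u_2) giving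
   such a clique number 24 n_p(K_4): a translation class of cliques has four members
   containing 0, each listed in 3! orders.  The degenerate terms only involve the 2k nonzero squares and, for a
   nonzero square v, the k - 1 squares u such that u - v is a nonzero square too.
   Altogether 4k |S(F_p)| + 224k = 1536 n_p(K_4) + 384k^2: the two counts determine
   each other linearly, and both sides of the equivalence express the same relation
   (whatever the value of J(k)). *)

Lemma sum_mem_card (T : finType) (C : {pred T}) : (\sum_(u : T) (u \in C : nat))%N = #|C|.
Proof. by rewrite -sum1_card [RHS]big_mkcond; apply: eq_bigr => u _; case: (u \in C). Qed.

Lemma sum_pred1 (T : finType) (a : T) : (\sum_(u : T) (u == a : nat))%N = 1%N.
Proof. by rewrite (bigD1 a) //= eqxx big1 // => u /negbTE ->. Qed.

Lemma sum_pair (I J : finType) (G : I * J -> nat) :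
  (\sum_(a : I * J) G a = \sum_(i : I) \sum_(j : J) G (i, j))%N.
Proof. by rewrite pair_bigA; apply: eq_bigr => [[]]. Qed.

Lemma ffun_neq_const (I : finType) (T : eqType) (x : {ffun I -> T}) (a : T) :
  x != [ffun => a] -> exists i, x i != a.
Proof.
move=> x_neq; apply/existsP; apply: contraR x_neq => /existsPn x_const.
by apply/eqP/ffunP => i; rewrite ffunE; apply/eqP; rewrite -[_ == _]negbK x_const.
Qed.

Lemma card_orbits_mul (T : finType) (X : {set T}) (orbit : T -> {set T}) (m : nat) :
  (forall x, x \in X -> orbit x \subset X) ->
  (forall x, x \in X -> #|orbit x| = m) ->
  (forall x y, x \in X -> y \in orbit x -> orbit y = orbit x) ->
  (forall x, x \in X -> x \in orbit x) ->
  (#|orbit @: X| * m)%N = #|X|.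
Proof.
move=> orbitX card_orbit orbit_eq orbit_refl.
rewrite -[#|X|]sum1_card (partition_big_imset orbit) /= -sum_nat_const.
apply: eq_bigr => _ /imsetP [x Xx ->].
rewrite sum1_card -(card_orbit _ Xx); apply: eq_card => y; rewrite unfold_in /=.
apply/idP/andP => [xy | [Xy /eqP <-]]; last exact: orbit_refl.
by have Xy := subsetP (orbitX _ Xx) _ xy; rewrite Xy (orbit_eq x y Xx xy) eqxx.
Qed.

Lemma count_injective_triples (T : finType) (B : {set T}) : #|B| = 3%N ->
  (\sum_(x : T) \sum_(y : T) \sum_(z : T)
     [&& x \in B, y \in B, z \in B, x != y, x != z & y != z])%N = 6%N.
Proof.
move=> B3; rewrite (eq_bigr (fun x => (x \in B) * 2)%N) => [|x _].
  by rewrite -big_distrl /= sum_mem_card B3.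
case Bx: (x \in B) => /=; last by rewrite big1 // => y _; rewrite big1.
rewrite (eq_bigr (fun y => (y \in B :\ x : nat))) => [|y _].
  by rewrite sum_mem_card; have := cardsD1 x B; rewrite Bx B3 /=; lia.
rewrite in_setD1 eq_sym; case By: (y \in B); last by rewrite andbF big1 // => z _; rewrite andbF.
case: eqP => [_ | /eqP xy] /=; first by rewrite big1 // => z _; rewrite !andbF.
rewrite (eq_bigr (fun z => (z \in (B :\ x) :\ y : nat))) => [|z _].
  rewrite sum_mem_card; have := cardsD1 y (B :\ x); have := cardsD1 x B.
  by rewrite in_setD1 By Bx B3 xy /=; lia.
rewrite !in_setD1 ![z == _]eq_sym.
by case: (z \in B); rewrite ?andbF //=; case: (x == z); case: (y == z).
Qed.

Section QuadraticResidueCounts.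

Variables (F : finFieldType) (k : nat).
Hypotheses (two_neq0 : (2 : F) != 0) (cardF : #|F| = (4 * k + 1)%N).

Definition nsqrt (x : F) : nat := (\sum_(y : F) (y * y == x)%R)%N.

Definition qr (x : F) : bool := (x != 0) && [exists y, y * y == x].

Lemma nsqrt0 : nsqrt 0 = 1%N.
Proof.
rewrite -(sum_pred1 (0 : F)); apply: eq_bigr => y _.
by rewrite mulf_eq0 orbb.
Qed.

Lemma qr0 : qr 0 = false.
Proof. by rewrite /qr eqxx. Qed.

Lemma qr_neq0 x : qr x -> x != 0.
Proof. by case/andP. Qed.

Lemma nsqrt_qr x : x != 0 -> nsqrt x = (2 * qr x)%N.
Proof.
move=> x_neq0; rewrite /qr x_neq0 /=; case: existsP => [[y /eqP yy] | no_root]; last first.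
  apply: big1 => y _; apply/eqP; rewrite eqb0.
  by apply/negP => /eqP yx; apply: no_root; exists y; rewrite yx.
have y_neq0 : y != 0 by apply: contraNneq x_neq0 => y0; rewrite -yy y0 mul0r.
have y_neqN : y != - y.
  by rewrite -addr_eq0 -mulr2n -mulr_natr mulf_neq0.
rewrite /nsqrt (eq_bigr (fun z => (z == y) + (z == - y))%N).
  by rewrite big_split /= !sum_pred1.
move=> z _; rewrite -yy -!expr2 eqf_sqr; case: eqP => [-> | _] //=.
by rewrite (negbTE y_neqN).
Qed.

Lemma nsqrt_eq2 x : qr x -> nsqrt x = 2%N.
Proof. by move=> qx; rewrite nsqrt_qr ?qr_neq0 ?qx. Qed.

Lemma sum_over_squares (g : F -> nat) :
  (\sum_(y : F) g (y * y)%R = \sum_(u : F) nsqrt u * g u)%N.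
Proof.
under [RHS]eq_bigr => u _ do rewrite big_distrl /=.
rewrite exchange_big /=; apply: eq_bigr => y _.
rewrite (bigD1 (y * y)) //= eqxx mul1n big1 ?addn0 // => u.
by rewrite eq_sym => /negbTE ->.
Qed.

Lemma sum_over_squares3 (G : F -> F -> F -> nat) :
  (\sum_(a : F) \sum_(b : F) \sum_(c : F) G (a * a)%R (b * b)%R (c * c)%R
   = \sum_(u : F) \sum_(v : F) \sum_(w : F) nsqrt u * nsqrt v * nsqrt w * G u v w)%N.
Proof.
under eq_bigr => a _ do under eq_bigr => b _ do rewrite (sum_over_squares (G (a * a) (b * b))).
under eq_bigr => a _ do rewrite (sum_over_squares (fun v => \sum_w nsqrt w * G (a * a)%R v w)%N).
rewrite (sum_over_squares (fun u => \sum_v nsqrt v * \sum_w nsqrt w * G u v w)%N).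
apply: eq_bigr => u _; rewrite big_distrr; apply: eq_bigr => v _ /=.
by rewrite mulnA big_distrr; apply: eq_bigr => w _ /=; rewrite !mulnA.
Qed.

Lemma sum_qr : (\sum_(u : F) qr u)%N = (2 * k)%N.
Proof.
have := sum_over_squares (fun _ => 1%N); rewrite sum1_card cardF (bigD1 0) //= nsqrt0.
rewrite (eq_bigr (fun u => 2 * qr u)%N) => [|u u_neq0]; last by rewrite nsqrt_qr ?muln1.
rewrite -big_distrr /= => h; rewrite [LHS](bigD1 0) //= qr0; lia.
Qed.

Lemma sum_qr_neq0 : (\sum_(u | u != 0%R) qr u)%N = (2 * k)%N.
Proof. by rewrite -sum_qr [RHS](bigD1 0) //= qr0. Qed.

(* (s, t) = (y - z, y + z) turns y^2 - z^2 = v into s t = v. *)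
Lemma card_hyperbola v : v != 0 ->
  (\sum_(y : F) \sum_(z : F) (y * y - z * z == v)%R)%N = (4 * k)%N.
Proof.
move=> v_neq0; rewrite pair_bigA /=.
pose rot (st : F * F) := ((st.1 + st.2) / 2, (st.2 - st.1) / 2).
pose unrot (yz : F * F) := (yz.1 - yz.2, yz.1 + yz.2).
have rotK : cancel rot unrot by case=> s t; congr pair; rewrite /= ?mulrDl; field.
rewrite (reindex_inj (can_inj rotK)) /=.
under eq_bigr => st _.
  have -> : (st.1 + st.2) / 2 * ((st.1 + st.2) / 2) - (st.2 - st.1) / 2 * ((st.2 - st.1) / 2)
            = st.1 * st.2 by field.
over.
rewrite -(pair_bigA _ (fun s t => (s * t == v)%R : nat)) /=.
rewrite (bigD1 0) //= big1 ?add0n => [|t _]; last by rewrite mul0r eq_sym (negbTE v_neq0).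
rewrite (eq_bigr (fun _ => 1%N)) => [|s s_neq0]; first by rewrite sum1_card cardC1 cardF addn1.
rewrite -(sum_pred1 (s^-1 * v)); apply: eq_bigr => t _.
by congr nat_of_bool; apply/eqP/eqP => [<- | ->]; rewrite ?mulKf ?mulVKf.
Qed.

Lemma sum_nsqrt_shift v : v != 0 ->
  (\sum_(u : F) nsqrt u * nsqrt (u - v)%R)%N = (4 * k)%N.
Proof.
move=> v_neq0; rewrite -(sum_over_squares (fun u => nsqrt (u - v))) -(card_hyperbola v_neq0).
apply: eq_bigr => y _; apply: eq_bigr => z _; congr nat_of_bool.
by apply/eqP/eqP => [-> | <-]; ring.
Qed.

Hypothesis sqrtN1 : exists i : F, i * i = -1.

Lemma nsqrtN x : nsqrt (- x) = nsqrt x.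
Proof.
have [i ii] := sqrtN1.
have i_neq0 : i != 0 by apply: contra_eq_neq ii => ->; rewrite mul0r eq_sym oppr_eq0 oner_eq0.
rewrite /nsqrt (reindex_inj (mulfI i_neq0)); apply: eq_bigr => y _.
by rewrite mulrACA ii mulN1r eqr_opp.
Qed.

Lemma qrN x : qr (- x) = qr x.
Proof.
have [-> | x_neq0] := eqVneq x 0; first by rewrite oppr0.
have := nsqrtN x; rewrite !nsqrt_qr ?oppr_eq0 //.
by case: (qr (- x)); case: (qr x).
Qed.

Lemma nsqrt_subC x y : nsqrt (x - y) = nsqrt (y - x).
Proof. by rewrite -nsqrtN opprB. Qed.

Lemma qr_subC x y : qr (x - y) = qr (y - x).
Proof. by rewrite -qrN opprB. Qed.

Lemma sum_nsqrt2_shift v : qr v ->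
  (\sum_(u : F) nsqrt u * nsqrt u * nsqrt (v - u)%R)%N = (8 * k - 2)%N.
Proof.
move=> qv; have v_neq0 := qr_neq0 qv.
have := sum_nsqrt_shift v_neq0.
rewrite (bigD1 0) //= nsqrt0 sub0r nsqrtN nsqrt_eq2 // => sum_shift.
rewrite (bigD1 0) //= nsqrt0 subr0 nsqrt_eq2 //.
rewrite (eq_bigr (fun u => 2 * (nsqrt u * nsqrt (u - v)%R))%N) -?big_distrr /=.
  by move: sum_shift; set S := (\sum_(i | _) _)%N; lia.
move=> u u_neq0; rewrite nsqrt_subC (nsqrt_qr u_neq0).
by case: (qr u); rewrite /= ?muln0 // !muln1 mulnA.
Qed.

Lemma count_consecutive_qr v : qr v ->
  (\sum_(u : F) (qr u && qr (u - v)%R))%N = (k - 1)%N.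
Proof.
move=> qv; have v_neq0 := qr_neq0 qv.
have := sum_nsqrt_shift v_neq0.
rewrite (bigD1 0) //= (bigD1 v) //= nsqrt0 sub0r nsqrtN subrr nsqrt0 nsqrt_eq2 //.
rewrite (eq_bigr (fun u => 4 * (qr u && qr (u - v)%R))%N)
  => [|u /andP [u_neq0 u_neq_v]]; last first.
  by rewrite !nsqrt_qr ?subr_eq0 //; case: (qr u); case: (qr (u - v)).
rewrite -big_distrr /= => sum_shift.
rewrite (bigD1 0) //= (bigD1 v) //= qr0 subrr qr0 andbF.
move: sum_shift; set S := (\sum_(i | _) _)%N; lia.
Qed.

(* The number of points of the affine cone over S with x_0^2 = u0, x_1^2 = u1 and
   x_2^2 = u2. *)
Definition k4_weight (u0 u1 u2 : F) : nat :=
  nsqrt u0 * nsqrt u1 * nsqrt u2 * nsqrt (u0 - u1) * nsqrt (u0 - u2) * nsqrt (u1 - u2).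

Definition qr_clique (u0 u1 u2 : F) : bool :=
  [&& qr u0, qr u1, qr u2, qr (u0 - u1), qr (u0 - u2) & qr (u1 - u2)].

Lemma qr_clique_neq u0 u1 u2 : qr_clique u0 u1 u2 ->
  [/\ u0 != 0, u1 != 0, u2 != 0 & [/\ u0 != u1, u0 != u2 & u1 != u2]].
Proof.
case/andP => q0 /and5P [q1 q2 q01 q02 q12].
by split; rewrite ?qr_neq0 //; split; rewrite -subr_eq0 qr_neq0.
Qed.

Lemma qr_clique_pairwise u0 u1 u2 : qr_clique u0 u1 u2 ->
  {in [:: 0; u0; u1; u2] &, forall x y, x != y -> qr (x - y)}.
Proof.
case/andP => q0 /and5P [q1 q2 q01 q02 q12] x y.
rewrite !inE => /or4P [] /eqP -> /or4P [] /eqP -> //; rewrite ?eqxx // => _;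
  by rewrite ?subr0 ?sub0r ?qrN // qr_subC.
Qed.

Lemma sum_k4_weight_00 : (\sum_(u : F) k4_weight 0%R 0%R u)%N = (16 * k + 1)%N.
Proof.
rewrite (bigD1 0) //= /k4_weight !subrr nsqrt0.
rewrite (eq_bigr (fun u => 8 * qr u)%N) => [|u u_neq0]; last first.
  by rewrite !sub0r nsqrtN nsqrt_qr //; case: (qr u).
by rewrite -big_distrr /= sum_qr_neq0; lia.
Qed.

Lemma sum_k4_weight_collapsed v : v != 0 ->
  [/\ (\sum_(u : F) k4_weight v 0%R u)%N = (4 * (8 * k - 2) * qr v)%N,
      (\sum_(u : F) k4_weight 0%R v u)%N = (4 * (8 * k - 2) * qr v)%N
    & (\sum_(u : F) k4_weight v v u)%N = (4 * (8 * k - 2) * qr v)%N].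
Proof.
move=> v_neq0.
pose M := (\sum_(u : F) nsqrt u * nsqrt u * nsqrt (v - u)%R)%N.
have weighted_M : (nsqrt v * nsqrt v * M)%N = (4 * (8 * k - 2) * qr v)%N.
  rewrite /M nsqrt_qr //; case qv: (qr v) => /=; last by rewrite !muln0.
  by rewrite sum_nsqrt2_shift // !muln1.
rewrite -weighted_M /M big_distrr /=; split.
- by apply: eq_bigr => u _; rewrite /k4_weight nsqrt0 subr0 sub0r nsqrtN; ring.
- by apply: eq_bigr => u _; rewrite /k4_weight nsqrt0 !sub0r !nsqrtN; ring.
rewrite (reindex_inj (inv_inj (subKr v))) /=; apply: eq_bigr => u _.
by rewrite /k4_weight subrr nsqrt0 subKr; ring.
Qed.

Lemma sum_k4_weight_generic u0 u1 : u0 != 0 -> u1 != 0 -> u0 != u1 ->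
  (\sum_(u : F) k4_weight u0 u1 u)%N
  = (96 * (qr u0 && qr u1 && qr (u0 - u1)%R) + 64 * \sum_(u : F) qr_clique u0 u1 u)%N.
Proof.
move=> u0_neq0 u1_neq0 u01_neq; have u01_neq0 : u0 - u1 != 0 by rewrite subr_eq0.
have [/andP [/andP [q0 q1] q01] | not_triangle] := boolP (qr u0 && qr u1 && qr (u0 - u1)).
  rewrite (eq_bigr (fun u => 32 * (u \in [:: 0%R; u0; u1]) + 64 * qr_clique u0 u1 u)%N).
    rewrite big_split /= -!big_distrr /= sum_mem_card.
    by rewrite (card_uniqP _) //= !inE negb_or ![0 == _]eq_sym u0_neq0 u1_neq0 u01_neq.
  move=> u _; rewrite /k4_weight /qr_clique q0 q1 q01.
  rewrite (nsqrt_eq2 q0) (nsqrt_eq2 q1) (nsqrt_eq2 q01) /=.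
  have [|u_new] := boolP (u \in [:: 0%R; u0; u1]).
    rewrite !inE => /or3P [] /eqP ->; rewrite ?eqxx ?orbT /=.
    - by rewrite qr0 !subr0 nsqrt0 (nsqrt_eq2 q0) (nsqrt_eq2 q1).
    - by rewrite subrr qr0 nsqrt0 (nsqrt_eq2 q0) nsqrt_subC (nsqrt_eq2 q01) andbF.
    - by rewrite subrr qr0 nsqrt0 (nsqrt_eq2 q1) (nsqrt_eq2 q01) !andbF.
  move: u_new; rewrite !inE !negb_or => /and3P [u_neq0 u_neq0' u_neq1].
  rewrite (nsqrt_qr u_neq0) !nsqrt_qr ?subr_eq0 1?eq_sym //.
  by case: (qr u); case: (qr (u0 - u)); case: (qr (u1 - u)).
rewrite big1 => [|u _]; last first.
  move: not_triangle; rewrite /k4_weight.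
  rewrite (nsqrt_qr u0_neq0) (nsqrt_qr u1_neq0) (nsqrt_qr u01_neq0).
  by case: (qr u0); case: (qr u1); case: (qr (u0 - u1)); rewrite //= !(muln0, mul0n).
rewrite big1 ?muln0 // => u _; apply/eqP; rewrite eqb0; apply: contra not_triangle.
by case/andP => -> /and5P [-> _ -> _ _].
Qed.

Lemma sum_k4_weight_row0 :
  (\sum_(u1 : F) \sum_(u : F) k4_weight 0%R u1 u)%N
  = (16 * k + 1 + 4 * (8 * k - 2) * (2 * k))%N.
Proof.
rewrite (bigD1 0) //= sum_k4_weight_00 -sum_qr_neq0 big_distrr /=; congr (_ + _)%N.
by apply: eq_bigr => v v_neq0; have [] := sum_k4_weight_collapsed v_neq0.
Qed.

Lemma sum_k4_weight_row u0 : u0 != 0 ->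
  (\sum_(u1 : F) \sum_(u : F) k4_weight u0 u1 u)%N
  = (qr u0 * (8 * (8 * k - 2) + 96 * (k - 1))
     + 64 * \sum_(u1 : F) \sum_(u : F) qr_clique u0 u1 u)%N.
Proof.
move=> u0_neq0; have [row_0 _ row_u0] := sum_k4_weight_collapsed u0_neq0.
rewrite (bigD1 0) //= row_0 (bigD1 u0) //= row_u0.
have -> : (\sum_(u1 : F) \sum_(u : F) qr_clique u0 u1 u
           = \sum_(u1 | (u1 != 0%R) && (u1 != u0)) \sum_(u : F) qr_clique u0 u1 u)%N.
  have no_clique0 : (\sum_(u : F) qr_clique u0 0%R u)%N = 0%N.
    by rewrite big1 // => u _; rewrite /qr_clique qr0 andbF.
  have no_clique_u0 : (\sum_(u : F) qr_clique u0 u0 u)%N = 0%N.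
    by rewrite big1 // => u _; rewrite /qr_clique subrr qr0 !andbF.
  by rewrite (bigD1 0) //= no_clique0 (bigD1 u0) //= no_clique_u0.
rewrite (eq_bigr (fun u1 => 96 * (qr u0 && qr u1 && qr (u0 - u1)%R)
                            + 64 * \sum_(u : F) qr_clique u0 u1 u)%N); last first.
  by move=> u1 /andP [u1_neq0 u1_neq_u0]; rewrite sum_k4_weight_generic // eq_sym.
rewrite big_split /= -!big_distrr /=.
have -> : (\sum_(u1 | (u1 != 0%R) && (u1 != u0)) (qr u0 && qr u1 && qr (u0 - u1)%R)
           = qr u0 * (k - 1))%N.
  case: (boolP (qr u0)) => [q0 | nq0]; last by rewrite big1 // => u1 _; rewrite (negbTE nq0).
  rewrite mul1n -(count_consecutive_qr q0) big_mkcond /=; apply: eq_bigr => u1 _.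
  have [-> | u1_neq0] := eqVneq u1 0; first by rewrite qr0.
  have [-> | u1_neq_u0] := eqVneq u1 u0; first by rewrite subrr qr0 andbF.
  by rewrite qr_subC.
set cliques := (\sum_(i | _) _)%N.
by case: (qr u0) => /=; lia.
Qed.

Lemma sum_k4_weight :
  (\sum_(u0 : F) \sum_(u1 : F) \sum_(u : F) k4_weight u0 u1 u)%N
  = (64 * \sum_(u0 : F) \sum_(u1 : F) \sum_(u : F) qr_clique u0 u1 u
     + (384 * k * k - 224 * k + 1))%N.
Proof.
rewrite (bigD1 0) //= sum_k4_weight_row0 [in RHS](bigD1 0) //=.
rewrite [X in (64 * (X + _))%N]big1 => [|u1 _]; last first.
  by rewrite big1 // => u _; rewrite /qr_clique qr0.
rewrite (eq_bigr _ (fun u0 => @sum_k4_weight_row u0)) big_split -big_distrl -big_distrr /=.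
by rewrite sum_qr_neq0; set cliques := (\sum_(i | _) _)%N; nia.
Qed.

End QuadraticResidueCounts.

Section PrimeField.

Variables p k : nat.
Hypotheses (p_prime : prime p) (p_eq : p = (4 * k + 1)%N).
Local Notation F := 'F_p.

Lemma k_gt0 : (0 < k)%N.
Proof. by move: p_prime; rewrite p_eq; case: k. Qed.

Lemma Fp_natr_neq0 n : (0 < n < p)%N -> (n%:R : F) != 0.
Proof.
move=> /andP [n_gt0 n_lt_p]; apply/eqP => n0.
have := val_Fp_nat p_prime n; rewrite n0 modn_small //=; lia.
Qed.

Lemma Fp_two_neq0 : (2 : F) != 0.
Proof. by apply: Fp_natr_neq0; have := k_gt0; lia. Qed.

Lemma Fp_card : #|F| = (4 * k + 1)%N.
Proof. by rewrite card_Fp // -p_eq. Qed.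

(* By Wilson's theorem -1 = (4k)!, and pairing j with p - j gives (4k)! = ((2k)!)^2. *)
Lemma Fp_sqrtN1 : exists i : F, i * i = -1.
Proof.
have fact_Fp n : ((n`!)%:R : F) = \prod_(j < n) (j.+1)%:R.
  by rewrite fact_prod natr_prod big_add1 big_mkord.
have wilson : (((4 * k)`!)%:R : F) = -1.
  have p_pred : p.-1 = (4 * k)%N by rewrite p_eq addn1.
  have := p_prime; rewrite Wilson ?p_pred => [p_dvd|]; last by rewrite p_eq; have := k_gt0; lia.
  by apply/eqP; rewrite -addr_eq0 natr1 -(Fp_nat_mod p_prime) (eqP p_dvd).
exists ((2 * k)`!)%:R; rewrite -wilson.
have -> : (4 * k = 2 * k + 2 * k)%N by lia.
rewrite [RHS]fact_Fp big_split_ord /= -fact_Fp; congr (_ * _).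
rewrite (reindex_inj rev_ord_inj) /=.
rewrite (eq_bigr (fun j : 'I_(2 * k) => - (j.+1)%:R : F)) => [|j _].
  by rewrite prodrN card_ord exprM sqrrN !expr1n mul1r.
apply/eqP; rewrite -addr_eq0 -natrD.
have -> : ((2 * k + (2 * k - j.+1)).+1 + j.+1 = p)%N by have := ltn_ord j; lia.
by rewrite pchar_Fp_0.
Qed.

Local Notation nsqrt := (@nsqrt F).
Local Notation qr := (@qr F).

Definition ffun6 (a : F * F * F * F * F * F) : {ffun 'I_6 -> F} :=
  [ffun i : 'I_6 => nth 0 [:: a.1.1.1.1.1; a.1.1.1.1.2; a.1.1.1.2; a.1.1.2; a.1.2; a.2] i].

Definition tuple6 (x : {ffun 'I_6 -> F}) : F * F * F * F * F * F :=
  (x (inord 0), x (inord 1), x (inord 2), x (inord 3), x (inord 4), x (inord 5)).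

Lemma ffun6K : cancel ffun6 tuple6.
Proof. by case=> [[[[[a0 a1] a2] a3] a4] a5]; rewrite /tuple6 /ffun6 !ffunE !inordK. Qed.

Lemma tuple6K : cancel tuple6 ffun6.
Proof.
move=> x; apply/ffunP => i; rewrite ffunE.
by case: i => [[|[|[|[|[|[|m]]]]]] i_lt] //=; congr (x _); apply: val_inj; rewrite /= inordK.
Qed.

Lemma card_cone :
  #|[set x : {ffun 'I_6 -> F} | Seq x]|
  = (\sum_(u0 : F) \sum_(u1 : F) \sum_(u2 : F) k4_weight u0 u1 u2)%N.
Proof.
rewrite -sum_mem_card (reindex ffun6); last first.
  by exists tuple6 => x _; [exact: ffun6K | exact: tuple6K].
rewrite !sum_pair; transitivity (\sum_(a0 : F) \sum_(a1 : F) \sum_(a2 : F)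
  nsqrt (a1 * a1 - a2 * a2)%R * nsqrt (a0 * a0 - a1 * a1)%R * nsqrt (a0 * a0 - a2 * a2)%R)%N.
  apply: eq_bigr => a0 _; apply: eq_bigr => a1 _; apply: eq_bigr => a2 _.
  rewrite /nsqrt !big_distrl /=; apply: eq_bigr => a3 _.
  rewrite -mulnA big_distrl /= big_distrr /=; apply: eq_bigr => a4 _.
  rewrite big_distrr /= big_distrr /=; apply: eq_bigr => a5 _.
  rewrite inE /Seq /ffun6 !ffunE !inordK //= -!expr2 !mulnb.
  by rewrite ![(_ ^+ 2 == _ - _)%R]eq_sym.
rewrite (sum_over_squares3
  (fun u v w => nsqrt (v - w)%R * nsqrt (u - v)%R * nsqrt (u - w)%R)%N).
by do 3!(apply: eq_bigr => ? _); rewrite /k4_weight; ring.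
Qed.

Lemma vscaleA (a b : F) x : vscale a (vscale b x) = vscale (a * b) x.
Proof. by apply/ffunP => i; rewrite !ffunE mulrA. Qed.

Lemma vscale1 (x : {ffun 'I_6 -> F}) : vscale 1 x = x.
Proof. by apply/ffunP => i; rewrite !ffunE mul1r. Qed.

Lemma vscale_eq0 (c : F) x : c != 0 -> (vscale c x == [ffun => 0]) = (x == [ffun => 0]).
Proof.
move=> c_neq0; apply/eqP/eqP => [/ffunP cx0 | ->]; apply/ffunP => i; rewrite !ffunE ?mulr0 //.
by have := cx0 i; rewrite !ffunE => /eqP; rewrite mulf_eq0 (negbTE c_neq0) => /eqP.
Qed.

Lemma Seq_vscale (c : F) x : c != 0 -> Seq (vscale c x) = Seq x.
Proof.
move=> c_neq0; have c2_neq0 : c ^+ 2 != 0 by rewrite expf_neq0.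
by rewrite /Seq /vscale !ffunE !exprMn -!mulrBr !(inj_eq (mulfI c2_neq0)).
Qed.

Lemma card_Spoints :
  (#|Spoints p| * (p - 1) + 1)%N = #|[set x : {ffun 'I_6 -> F} | Seq x]|.
Proof.
pose X := [set x : {ffun 'I_6 -> F} | (x != [ffun => 0]) && Seq x].
pose line x := [set vscale c x | c in [set c : F | c != 0]].
have -> : (#|Spoints p| * (p - 1) = #|X|)%N.
  apply: (@card_orbits_mul _ X line).
  - move=> x; rewrite inE => /andP [x_neq0 Sx]; apply/subsetP => y /imsetP [c].
    by rewrite !inE => c_neq0 ->; rewrite vscale_eq0 // Seq_vscale // x_neq0.
  - move=> x; rewrite inE => /andP [x_neq0 _].
    have [i xi_neq0] := ffun_neq_const x_neq0.
    rewrite card_in_imset; first by rewrite cardsE cardC1 card_Fp // p_eq; lia.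
    by move=> a b _ _ /ffunP /(_ i); rewrite !ffunE; apply: mulIf.
  - move=> x y _ /imsetP [c]; rewrite inE => c_neq0 ->.
    apply/setP => z; apply/imsetP/imsetP => [[d] | [d]]; rewrite inE => d_neq0 ->.
      by exists (d * c); rewrite ?vscaleA // inE mulf_neq0.
    exists (d / c); first by rewrite inE mulf_neq0 ?invr_eq0.
    by rewrite vscaleA mulfVK.
  - by move=> x _; apply/imsetP; exists 1; rewrite ?vscale1 // inE oner_eq0.
have -> : [set x : {ffun 'I_6 -> F} | Seq x] = [ffun => 0] |: X.
  apply/setP => x; rewrite !inE; case: eqP => [-> | _] //=.
  by rewrite /Seq !ffunE !expr2 !mul0r subr0 eqxx.
by rewrite cardsU1 inE eqxx /= addnC.
Qed.

Definition translate (t : F) (A : {set F}) : {set F} := [set a + t | a in A].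

Lemma card_translate t (A : {set F}) : #|translate t A| = #|A|.
Proof. by rewrite card_imset //; apply: addIr. Qed.

Lemma translate0 (A : {set F}) : translate 0 A = A.
Proof.
apply/setP => x; apply/imsetP/idP => [[a Aa ->] | Ax]; first by rewrite addr0.
by exists x; rewrite ?addr0.
Qed.

Lemma translateD s t (A : {set F}) : translate s (translate t A) = translate (t + s) A.
Proof.
apply/setP => x; apply/imsetP/imsetP => [[_ /imsetP [a Aa ->] ->] | [a Aa ->]].
  by exists a; rewrite // addrA.
by exists (a + t); [apply/imsetP; exists a | rewrite addrA].
Qed.

Lemma translateK t : cancel (translate t) (translate (- t)).
Proof. by move=> A; rewrite translateD addrN translate0. Qed.

Lemma mem_translate t (A : {set F}) : (t \in translate t A) = (0 \in A).
Proof.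
apply/imsetP/idP => [[a Aa /eqP] | A0]; last by exists 0; rewrite ?add0r.
by rewrite -{1}(add0r t) (inj_eq (addIr t)) => /eqP ->.
Qed.

Lemma goodK4P (A : {set F}) :
  reflect (#|A| = 4%N /\ {in A &, forall x y, x != y -> qr (x - y)}) (A \in goodK4 p).
Proof.
rewrite inE; apply: (iffP andP) => [[/eqP A4 /forallP good] | [A4 good]].
  split=> // x y Ax Ay xy; move: (good x); rewrite Ax => /forall_inP /(_ y Ay).
  by rewrite xy.
split; first by rewrite A4.
by apply/forall_inP => x Ax; apply/forall_inP => y Ay; apply/implyP; apply: good.
Qed.

Lemma good_translate t (A : {set F}) : (translate t A \in goodK4 p) = (A \in goodK4 p).
Proof.
suff good_tr u B : B \in goodK4 p -> translate u B \in goodK4 p.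
  by apply/idP/idP => [/(good_tr (- t)) | /good_tr //]; rewrite translateK.
case/goodK4P => B4 good; apply/goodK4P; split; first by rewrite card_translate.
move=> _ _ /imsetP [a Ba ->] /imsetP [b Bb ->]; rewrite (inj_eq (addIr u)) [b + u]addrC addrKA.
exact: good.
Qed.

(* The sum of the elements of A moves by #|A| t under translation by t. *)
Lemma translate_free (A : {set F}) s t : #|A| = 4%N -> translate t A = translate s A -> t = s.
Proof.
have sum_translate u : \sum_(b in translate u A) b = \sum_(a in A) a + u *+ #|A|.
  rewrite big_imset /=; last by move=> a b _ _; apply: addIr.
  by rewrite big_split /= sumr_const.
move=> A4 /(congr1 (fun B : {set F} => \sum_(b in B) b)) /=.
rewrite !sum_translate A4 => /addrI /eqP.
rewrite -subr_eq0 -mulrnBl -mulr_natr mulf_eq0 subr_eq0 orbC.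
by rewrite (negbTE (Fp_natr_neq0 _)) ?p_eq /= => [/eqP | ]; last by have := k_gt0; lia.
Qed.

Lemma card_goodK4 : #|goodK4 p| = (npK4 p * p)%N.
Proof.
symmetry.
apply: (@card_orbits_mul _ (goodK4 p) (fun A => [set translate t A | t : F])).
- by move=> A A_good; apply/subsetP => B /imsetP [t _ ->]; rewrite good_translate.
- move=> A /goodK4P [A4 _]; rewrite card_imset ?card_Fp //.
  by move=> t s /(translate_free A4).
- move=> A _ _ /imsetP [t _ ->]; apply/setP => B.
  apply/imsetP/imsetP => [[s _ ->] | [s _ ->]]; first by exists (t + s); rewrite ?translateD.
  by exists (s - t); rewrite // translateD addrC subrK.
- by move=> A _; apply/imsetP; exists 0; rewrite ?translate0.
Qed.

Definition good0 : {set {set F}} := [set A in goodK4 p | 0 \in A].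

Lemma in_good0 (A : {set F}) : (A \in good0) = (A \in goodK4 p) && (0 \in A).
Proof. by rewrite inE. Qed.

Lemma card_good0 : (#|goodK4 p| * 4 = p * #|good0|)%N.
Proof.
have -> : (#|goodK4 p| * 4 = \sum_(A in goodK4 p) \sum_(t : F) (t \in A))%N.
  rewrite -sum1_card big_distrl /=; apply: eq_bigr => A /goodK4P [A4 _].
  by rewrite sum_mem_card A4.
rewrite exchange_big /= -[X in (X * _)%N](card_Fp p_prime) -sum1_card big_distrl /=.
apply: eq_bigr => t _; rewrite mul1n (reindex_inj (can_inj (translateK t))) /=.
rewrite (eq_bigl (fun A => A \in goodK4 p)) => [|A]; last by rewrite good_translate.
rewrite -sum1_card big_mkcond [RHS]big_mkcond /=; apply: eq_bigr => A _.
by rewrite mem_translate in_good0; case: (A \in goodK4 p); case: (0 \in A).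
Qed.

Definition clique_set (u0 u1 u2 : F) : {set F} := [set x in [:: 0; u0; u1; u2]].

Lemma card_clique_set u0 u1 u2 :
  uniq [:: 0; u0; u1; u2] -> #|clique_set u0 u1 u2| = 4%N.
Proof. by move=> uniq_u; rewrite cardsE; apply/card_uniqP. Qed.

Lemma clique_set_good0 u0 u1 u2 : qr_clique u0 u1 u2 -> clique_set u0 u1 u2 \in good0.
Proof.
move=> clique_u; have [u0_neq0 u1_neq0 u2_neq0 [u01 u02 u12]] := qr_clique_neq clique_u.
rewrite in_good0 [0 \in _]inE mem_head andbT; apply/goodK4P; split.
  apply: card_clique_set; rewrite /= !inE !negb_or ![0 == _]eq_sym.
  by rewrite u0_neq0 u1_neq0 u2_neq0 u01 u02 u12.
by move=> x y; rewrite !in_set; apply: (qr_clique_pairwise Fp_two_neq0 Fp_sqrtN1 clique_u).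
Qed.

Lemma qr_clique_fibre (A : {set F}) u0 u1 u2 : A \in good0 ->
  (qr_clique u0 u1 u2 && (clique_set u0 u1 u2 == A))
  = [&& u0 \in A :\ 0, u1 \in A :\ 0, u2 \in A :\ 0, u0 != u1, u0 != u2 & u1 != u2].
Proof.
rewrite in_good0 => /andP [/goodK4P [A4 goodA] A0]; apply/idP/idP.
  case/andP => clique_u /eqP <-.
  have [u0_neq0 u1_neq0 u2_neq0 [u01 u02 u12]] := qr_clique_neq clique_u.
  by rewrite !in_setD1 u0_neq0 u1_neq0 u2_neq0 u01 u02 u12 !inE !eqxx !orbT.
case/andP => + /and5P [+ + u01 u02 u12]; rewrite !in_setD1.
move=> /andP [u0_neq0 Au0] /andP [u1_neq0 Au1] /andP [u2_neq0 Au2].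
have uniq_u : uniq [:: 0; u0; u1; u2].
  by rewrite /= !inE !negb_or ![0 == _]eq_sym u0_neq0 u1_neq0 u2_neq0 u01 u02 u12.
have qrA x : x \in A -> x != 0 -> qr x by move=> Ax x_neq0; rewrite -[x]subr0; apply: goodA.
apply/andP; split.
  by rewrite /qr_clique (qrA u0) // (qrA u1) // (qrA u2) //=; apply/and3P; split; apply: goodA.
rewrite eqEcard A4 card_clique_set // leqnn andbT; apply/subsetP => x.
by rewrite !inE => /or4P [] /eqP ->.
Qed.

Lemma sum_qr_clique : (\sum_(u0 : F) \sum_(u1 : F) \sum_(u2 : F) qr_clique u0 u1 u2)%N
                      = (6 * #|good0|)%N.
Proof.
have split_by_set u0 u1 u2 : (qr_clique u0 u1 u2 : nat)
    = (\sum_(A in good0) (qr_clique u0 u1 u2 && (clique_set u0 u1 u2 == A)))%N.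
  case clique_u: (qr_clique u0 u1 u2) => /=; last by rewrite big1.
  rewrite (bigD1 (clique_set u0 u1 u2)) ?clique_set_good0 //= eqxx.
  by rewrite big1 // => A /andP [_ /negbTE]; rewrite eq_sym => ->.
under eq_bigr => u0 _ do under eq_bigr => u1 _ do under eq_bigr => u2 _ do rewrite split_by_set.
under eq_bigr => u0 _ do under eq_bigr => u1 _ do rewrite exchange_big.
under eq_bigr => u0 _ do rewrite exchange_big.
rewrite exchange_big /= mulnC -sum1_card big_distrl /=; apply: eq_bigr => A good0_A.
under eq_bigr => u0 _ do under eq_bigr => u1 _ do under eq_bigr => u2 _ do
  rewrite qr_clique_fibre //.
rewrite mul1n; apply: count_injective_triples.
move: good0_A; rewrite in_good0 => /andP [/goodK4P [A4 _] A0].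
by have := cardsD1 0 A; rewrite A0 A4 => -[].
Qed.

Lemma sum_qr_clique_npK4 :
  (\sum_(u0 : F) \sum_(u1 : F) \sum_(u2 : F) qr_clique u0 u1 u2)%N = (24 * npK4 p)%N.
Proof.
have p_gt0 : (0 < p)%N by rewrite p_eq addn1.
have card_good0_eq : #|good0| = (4 * npK4 p)%N.
  apply/eqP; rewrite -(eqn_pmul2l p_gt0) -card_good0 card_goodK4; apply/eqP; ring.
by rewrite sum_qr_clique card_good0_eq mulnA.
Qed.

Lemma card_Spoints_npK4 :
  (#|Spoints p| * (4 * k) + 224 * k = 1536 * npK4 p + 384 * k * k)%N.
Proof.
have := card_Spoints.
rewrite card_cone (sum_k4_weight Fp_two_neq0 Fp_card Fp_sqrtN1) sum_qr_clique_npK4.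
have := k_gt0; rewrite p_eq addnK; nia.
Qed.

End PrimeField.

Lemma count_relation_iff (R : numFieldType) (S n k J : R) : k != 0 ->
  S * (4 * k) + 224 * k = 1536 * n + 384 * k * k ->
  n = (k * (k - 1) * (k - 4) + 2 * k * ((J ^+ 2 - 4) / 32)) / 24
  <-> S = (4 * k + 1 + 1) ^+ 2 + J ^+ 2.
Proof.
move=> k_neq0 relation; split => [n_val | S_val].
  have four_k_neq0 : 4 * k != 0 by rewrite mulf_neq0 ?pnatr_eq0.
  apply: (mulIf four_k_neq0); apply: (addIr (224 * k)); rewrite relation n_val.
  by field.
apply: (mulIf (_ : 1536 != 0)); first by rewrite pnatr_eq0.
by rewrite mulrC -(addrK (384 * k * k) (1536 * n)) -relation S_val; field.
Qed.

Theorem lemma4p2 (k : nat) (hp : prime (4 * k + 1)) :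
  ((npK4 (4 * k + 1))%:R
     = (k%:R * (k%:R - 1) * (k%:R - 4) + 2 * k%:R * dk k) / 24 :> rat)
  <-> ((#|Spoints (4 * k + 1)|)%:Z = ((4 * k + 1)%:Z + 1) ^+ 2 + (Jk k) ^+ 2).
Proof.
have k_neq0 : (k%:R : rat) != 0 by rewrite pnatr_eq0 -lt0n (k_gt0 hp erefl).
have := congr1 (GRing.natmul (1 : rat)) (card_Spoints_npK4 hp erefl).
rewrite (natrD _ (_ * _)) (natrD _ (1536 * _)) !natrM => relation.
rewrite /dk (count_relation_iff _ k_neq0 relation).
have -> : (4 * k%:R + 1 + 1) ^+ 2 + (Jk k)%:~R ^+ 2
          = ((((4 * k + 1)%:Z + 1) ^+ 2 + Jk k ^+ 2)%:~R : rat).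
  rewrite rmorphD !rmorphXn rmorphD /= rmorph1.
  by rewrite -[((4 * k + 1)%:Z)%:~R]/((4 * k + 1)%:R : rat) natrD natrM.
split => S_val; first exact: (@intr_inj rat #|Spoints (4 * k + 1)| _ S_val).
exact: (congr1 (fun z : int => z%:~R : rat) S_val).
Qed.
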